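(* Let $T$ be a complete theory and $\phi(x,y)$ a formula. The following are equivalent: (1) $\phi(x,y)$ has the order property. (2) There exist a model $M$ of $T$, a tuple $b\in M$, $\sigma\in\mathrm{Aut}(M)$ and $a\in M$ such that, with $U=\phi(M,b)$, $\xi_{\sigma,U}(a)=\bar1\bar0$. (3) The same as (2) with the additional requirement $\sigma\in W_b$. (4) There exist a model $M$ of $T$, a tuple $b\in M$ and $\sigma\in\mathrm{Aut}(M)$ such that, with $U=\phi(M,b)$, for every $n\in\mathbb{N}$ some element of $\xi_{\sigma,U}(M)$ contains $(\bar1\bar0)_n$ as a subsequence. (5) There exist a model $M$ of $T$ and $\sigma\in\mathrm{Aut}(M)$ such that for every $n\in\mathbb{N}$ there is an instance $U_n=\phi(M,b_n)$, $b_n\in M$, such that some element of $\xi_{\sigma,U_n}(M)$ contains $(\bar1\bar0)_n$ as a subsequence. (6) There exist a model $M$ of $T$, a tuple $b\in M$ and $\sigma\in\mathrm{Aut}(M)$ such that, with $U=\phi(M,b)$, the topological closure of $\xi_{\sigma,U}(M)$ in $2^{\mathbb{Z}}$ contains $\bar1\bar0$. (7) There exists a model $M$ of $T$ such that $\bar1\bar0\in\rho_\phi(M)$.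
   Context: $\phi(x,y)$ has the order property if there is a model in which for every $n$ there are $a_1,\dots,a_n$ and $b_1,\dots,b_n$ with $\phi(a_i,b_j)\iff i\le j$. Subsets of $\mathbb{Z}$ are identified with binary $\mathbb{Z}$-sequences; $2^{\mathbb{Z}}$ has the product topology. $\bar1\bar0$ is the sequence $I$ with $I(i)=1$ for $i\le0$ and $I(i)=0$ for $i>0$; $(\bar1\bar0)_n$ is its restriction to coordinates $-n,\dots,n$ (a finite block), and ''contains as a subsequence'' means occurs as a block of consecutive entries. For $\sigma\in\mathrm{Aut}(M)$ and $U\subseteq M$, $\xi_{\sigma,U}(a)=\{n\in\mathbb{Z}:\sigma^n(a)\in U\}$ and $\xi_{\sigma,U}(M)$ is its image. $W_b$ is the set of automorphisms $\sigma$ of $M$ such that $(\sigma^n(b))_{n\in\mathbb{Z}}$ is an indiscernible sequence. $\rho_\phi(M)=\bigcup_b\bigcup_{\sigma\in\mathrm{Aut}(M)}\xi_{\sigma,\phi(M,b)}(M)$. *)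

From mathcomp Require Import all_boot all_order all_algebra.
Set Implicit Arguments. Unset Strict Implicit. Unset Printing Implicit Defensive.
Import Order.TTheory GRing.Theory Num.Theory.

Record signature := Signature {
  fsym : Type; fari : fsym -> nat;   (* function symbols (constants: arity 0) *)
  rsym : Type; rari : rsym -> nat }.

Section Syntax.
Variable L : signature.

Inductive term : Type :=
| Var : nat -> term
| Fn : forall f : fsym L, ('I_(fari f) -> term) -> term.

Inductive formula : Type :=
| FEq : term -> term -> formula
| FRel : forall r : rsym L, ('I_(rari r) -> term) -> formula
| FNot : formula -> formula
| FAnd : formula -> formula -> formula
| FEx : nat -> formula -> formula.

Fixpoint tfree (t : term) (j : nat) : Prop :=
  match t with
  | Var i => i = j
  | Fn f ts => exists i, tfree (ts i) j
  end.

Fixpoint ffree (p : formula) (j : nat) : Prop :=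
  match p with
  | FEq t1 t2 => tfree t1 j \/ tfree t2 j
  | FRel r ts => exists i, tfree (ts i) j
  | FNot q => ffree q j
  | FAnd q1 q2 => ffree q1 j \/ ffree q2 j
  | FEx i q => j <> i /\ ffree q j
  end.

Definition sentence (p : formula) : Prop := forall j, ~ ffree p j.
End Syntax.

Record structure (L : signature) := Structure {
  carrier :> Type;
  nonempty : inhabited carrier;
  fint : forall f : fsym L, ('I_(fari f) -> carrier) -> carrier;
  rint : forall r : rsym L, ('I_(rari r) -> carrier) -> Prop }.

Section Semantics.
Variables (L : signature) (M : structure L).

Fixpoint eval (v : nat -> M) (t : term L) : M :=
  match t with
  | Var i => v i
  | Fn f ts => @fint L M f (fun i => eval v (ts i))
  end.

Definition upd (v : nat -> M) (i : nat) (m : M) : nat -> M :=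
  fun j => if j == i then m else v j.

Fixpoint sat (v : nat -> M) (p : formula L) : Prop :=
  match p with
  | FEq t1 t2 => eval v t1 = eval v t2
  | FRel r ts => @rint L M r (fun i => eval v (ts i))
  | FNot q => ~ sat v q
  | FAnd q1 q2 => sat v q1 /\ sat v q2
  | FEx i q => exists m : M, sat (upd v i m) q
  end.

(* M |= p[e_0, ..., e_(len-1)]; used only for p whose free variables are < len *)
Definition holds (p : formula L) (len : nat) (e : nat -> M) : Prop :=
  forall v : nat -> M, (forall j, j < len -> v j = e j) -> sat v p.
End Semantics.
Arguments eval {L} M v t.
Arguments sat {L} M v p.
Arguments holds {L} M p len e.
Arguments upd {L} M v i m.

Definition models (L : signature) (M : structure L) (T : formula L -> Prop) : Prop :=
  forall p, T p -> forall v, sat M v p.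

Definition complete_theory (L : signature) (T : formula L -> Prop) : Prop :=
  (forall p, T p -> sentence p) /\
  (exists M : structure L, models M T) /\
  (forall p, sentence p ->
     (forall M : structure L, models M T -> forall v, sat M v p) \/
     (forall M : structure L, models M T -> forall v, sat M v (FNot p))).

Record aut (L : signature) (M : structure L) := Aut {
  afun : M -> M;
  ainv : M -> M;
  afunK : cancel afun ainv;
  ainvK : cancel ainv afun;
  aut_fn : forall f ms, afun (@fint L M f ms) = @fint L M f (afun \o ms);
  aut_rel : forall r ms, @rint L M r ms <-> @rint L M r (afun \o ms) }.

Definition autpow (L : signature) (M : structure L) (s : aut M) (n : int) : M -> M :=
  match n with
  | Posz k => iter k (afun s)
  | Negz k => iter k.+1 (ainv s)   (* Negz k = -(k+1) *)
  end.

(* ---------- The formula phi(x,y), |x| = kx, |y| = ky ----------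
   Free variables 0..kx-1 are x, kx..kx+ky-1 are y.  Tuples are maps nat -> M
   of which only the first kx (resp. ky) entries are used. *)
Definition env (M : Type) (kx : nat) (a b : nat -> M) : nat -> M :=
  fun j => if j < kx then a j else b (j - kx).

Definition phi_holds (L : signature) (M : structure L) (phi : formula L)
  (kx ky : nat) (a b : nat -> M) : Prop :=
  holds M phi (kx + ky) (env kx a b).

Arguments phi_holds {L} M phi kx ky a b.

Definition inst (L : signature) (M : structure L) (phi : formula L)
  (kx ky : nat) (b : nat -> M) : (nat -> M) -> Prop :=
  fun a => @phi_holds L M phi kx ky a b.

Arguments inst {L} M phi kx ky b _.

Definition order_property (L : signature) (T : formula L -> Prop)
  (phi : formula L) (kx ky : nat) : Prop :=
  exists M : structure L, models M T /\
    forall n : nat, exists a b : nat -> nat -> M,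
      forall i j, i < n -> j < n -> (@phi_holds L M phi kx ky (a i) (b j) <-> i <= j).

(* ---------- Binary Z-sequences = subsets of Z ---------- *)
Local Open Scope ring_scope.

Definition xi (L : signature) (M : structure L) (s : aut M)
  (U : (nat -> M) -> Prop) (a : nat -> M) : int -> Prop :=
  fun n => U (autpow s n \o a).

Definition xiM (L : signature) (M : structure L) (s : aut M)
  (U : (nat -> M) -> Prop) : (int -> Prop) -> Prop :=
  fun J => exists a : nat -> M, J = xi s U a.

Definition I10 : int -> Prop := fun i => i <= 0.

(* J contains (\bar1\bar0)_n (coordinates -n..n) as a block of consecutive entries *)
Definition contains_block (J : int -> Prop) (n : nat) : Prop :=
  exists k : int, forall i : int, - (n%:Z) <= i <= n%:Z -> (J (k + i) <-> I10 i).

(* closure in the product topology of 2^Z (basic neighbourhoods fix finitely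
   many coordinates, w.l.o.g. the coordinates in [-N, N]) *)
Definition in_closure (S : (int -> Prop) -> Prop) (I : int -> Prop) : Prop :=
  forall N : nat, exists J, S J /\ forall n : int, `|n| <= N%:Z -> (J n <-> I n).

Definition indiscernible (L : signature) (M : structure L) (ky : nat)
  (s : int -> nat -> M) : Prop :=
  forall (psi : formula L) (k : nat) (i j : nat -> int),
    (forall v, ffree psi v -> (v < k * ky)%N) ->
    (forall m, (m.+1 < k)%N -> i m < i m.+1) ->
    (forall m, (m.+1 < k)%N -> j m < j m.+1) ->
    (holds M psi (k * ky) (fun v => s (i (v %/ ky)%N) (v %% ky)%N) <->
     holds M psi (k * ky) (fun v => s (j (v %/ ky)%N) (v %% ky)%N)).

Definition inW (L : signature) (M : structure L) (ky : nat) (b : nat -> M)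
  (s : aut M) : Prop :=
  indiscernible ky (fun n => autpow s n \o b).

Definition rho (L : signature) (M : structure L) (phi : formula L) (kx ky : nat)
  : (int -> Prop) -> Prop :=
  fun J => exists (b : nat -> M) (s : aut M), xiM s (inst M phi kx ky b) J.
Arguments rho {L} M phi kx ky.

(* Every implication but (1) => (3) is bookkeeping; the key one is that a block
   [(\bar1\bar0)_n] at position k of [xi_{s,phi(M,b)}(a)] is the order pattern
   [phi(s^(k+i) a, s^j b) <-> i <= j].
   For (1) => (3), fix witnesses [a_{N,i}], [b_{N,j}] of the order property in M0
   and a nonprincipal ultrafilter U on nat.  Coordinates are Z plus a top point
   oo; a property of x : Z + {oo} -> nat is large if it holds "for U-most x(c_1),
   ..., for U-most x(c_k)" with c_1 < ... < c_k a window containing the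
   coordinates it depends on.  Large properties form an ultrafilter invariant
   under order-preserving renamings of coordinates, in particular under shifts
   of Z.  The corresponding ultrapower of M0 satisfies Los's theorem, the shift
   induces an automorphism s.  As U is nonprincipal, x(c) < x(d) is large for
   c < d, so for a = [x |-> a_{x(oo), x(0)}] and b = [x |-> b_{x(oo), x(0)}]
   the property [phi(s^n a, b)], i.e. x(n) <= x(0), is large iff n <= 0.
   Renaming invariance makes [(s^n b)_n] indiscernible. *)
From mathcomp Require Import all_boot all_order all_algebra zify.
From mathcomp Require filter.
From Stdlib Require Import Classical FunctionalExtensionality PropExtensionality.
From Stdlib Require Import ClassicalEpsilon ProofIrrelevance.
Set Implicit Arguments. Unset Strict Implicit. Unset Printing Implicit Defensive.
Import Order.TTheory GRing.Theory Num.Theory.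

Section Satisfaction.
Variables (L : signature) (M : structure L).

Lemma eval_ext (t : term L) (v w : nat -> M) :
  (forall j, tfree t j -> v j = w j) -> eval M v t = eval M w t.
Proof.
elim: t => [i|f ts IH] h /=; first exact: h.
congr fint; apply: functional_extensionality => i; apply: IH => j hj.
by apply: h; exists i.
Qed.

Lemma sat_ext (p : formula L) (v w : nat -> M) :
  (forall j, ffree p j -> v j = w j) -> (sat M v p <-> sat M w p).
Proof.
elim: p v w => [t1 t2|r ts|q IH|q1 IH1 q2 IH2|i q IH] v w h /=.
- by rewrite (@eval_ext t1 v w) ?(@eval_ext t2 v w) // => j hj; apply: h; [right|left].
- have -> // : (fun i => eval M v (ts i)) = (fun i => eval M w (ts i)).
  apply: functional_extensionality => i; apply: eval_ext => j hj; apply: h; by exists i.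
- by rewrite (IH v w h).
- by rewrite (IH1 v w) ?(IH2 v w) // => j hj; apply: h; [right|left].
- have E m : sat M (upd M v i m) q <-> sat M (upd M w i m) q.
    by apply: IH => j hj; rewrite /upd; case: eqP => // ji; apply: h.
  by split=> -[m hm]; exists m; apply/E.
Qed.

Lemma term_free_bounded (t : term L) : exists K, forall j, tfree t j -> (j < K)%N.
Proof.
elim: t => [i|f ts IH]; first by exists i.+1 => j /= ->.
have [g hg] := fin_all_exists IH.
exists (\max_(i < fari f) g i) => j [i /hg hi].
exact: leq_trans hi (leq_bigmax i).
Qed.

Lemma formula_free_bounded (p : formula L) : exists K, forall j, ffree p j -> (j < K)%N.
Proof.
elim: p => [t1 t2|r ts|q IH|q1 [K1 h1] q2 [K2 h2]|i q [K h]] //.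
- have [K1 h1] := term_free_bounded t1; have [K2 h2] := term_free_bounded t2.
  by exists (maxn K1 K2) => j [/h1|/h2] hj; rewrite leq_max hj ?orbT.
- have [g hg] := fin_all_exists (fun i => term_free_bounded (ts i)).
  exists (\max_(i < rari r) g i) => j [i /hg hi].
  exact: leq_trans hi (leq_bigmax i).
- by exists (maxn K1 K2) => j [/h1|/h2] hj; rewrite leq_max hj ?orbT.
- by exists K => j [_ /h].
Qed.

Lemma holdsE (p : formula L) len (e : nat -> M) :
  (forall j, ffree p j -> (j < len)%N) -> (holds M p len e <-> sat M e p).
Proof.
move=> hb; split=> [h|h v hv]; first exact: h.
by apply/(sat_ext (w := e)) => // j /hb; apply: hv.
Qed.

Definition automorphic (g : M -> M) :=
  [/\ forall f ms, g (@fint L M f ms) = @fint L M f (g \o ms),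
      forall r ms, @rint L M r ms <-> @rint L M r (g \o ms) &
      exists h, cancel g h /\ cancel h g].

Lemma eval_automorphic g (t : term L) v :
  automorphic g -> eval M (g \o v) t = g (eval M v t).
Proof.
case=> hf _ _; elim: t => [i|f ts IH] //=.
by rewrite hf; congr fint; apply: functional_extensionality => i /=; apply: IH.
Qed.

Lemma sat_automorphic g (p : formula L) v :
  automorphic g -> (sat M (g \o v) p <-> sat M v p).
Proof.
move=> hg; have [_ hr [h [gK hK]]] := hg; have ginj := can_inj gK.
elim: p v => [t1 t2|r ts|q IH|q1 IH1 q2 IH2|i q IH] v /=.
- by rewrite !eval_automorphic //; split=> [/ginj|->].
- have -> : (fun i => eval M (g \o v) (ts i)) = g \o (fun i => eval M v (ts i)).
    by apply: functional_extensionality => i; rewrite eval_automorphic.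
  by rewrite -hr.
- by rewrite IH.
- by rewrite IH1 IH2.
- have updE m : upd M (g \o v) i (g m) = g \o upd M v i m.
    by apply: functional_extensionality => j; rewrite /upd /comp; case: eqP.
  split=> -[m hm]; last by exists (g m); rewrite updE IH.
  by exists (h m); rewrite -IH -updE hK.
Qed.

Lemma automorphic_comp g1 g2 : automorphic g1 -> automorphic g2 -> automorphic (g1 \o g2).
Proof.
move=> [f1 r1 [h1 [c1 c1']]] [f2 r2 [h2 [c2 c2']]]; split.
- by move=> f ms /=; rewrite f2 f1.
- by move=> r ms; rewrite (r2 r ms) (r1 r).
- by exists (h2 \o h1); split=> x /=; rewrite ?c1 ?c2 ?c2' ?c1'.
Qed.

Lemma automorphic_iter g k : automorphic g -> automorphic (iter k g).
Proof.
move=> hg; elim: k => [|k IH]; first by split=> //; exists id.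
exact: automorphic_comp.
Qed.

Lemma automorphic_afun (s : aut M) : automorphic (afun s).
Proof. by split; [apply: aut_fn | apply: aut_rel | exists (ainv s); split; [apply: afunK | apply: ainvK]]. Qed.

Lemma automorphic_ainv (s : aut M) : automorphic (ainv s).
Proof.
have afunV ms : afun s \o (ainv s \o ms) = ms.
  by apply: functional_extensionality => i /=; rewrite ainvK.
split.
- by move=> f ms; apply: (can_inj (afunK s)); rewrite ainvK aut_fn afunV.
- by move=> r ms; rewrite (aut_rel s (ainv s \o ms)) afunV.
- by exists (afun s); split; [apply: ainvK | apply: afunK].
Qed.

Lemma automorphic_autpow (s : aut M) n : automorphic (autpow s n).
Proof.
by case: n => k /=; apply: automorphic_iter; [apply: automorphic_afun | apply: automorphic_ainv].
Qed.

Lemma autpowS (s : aut M) (n : int) x : autpow s (n + 1) x = afun s (autpow s n x).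
Proof.
case: n => [k|[|k]].
- by have -> : (Posz k + 1 = Posz k.+1)%R by lia.
- have -> : (Negz 0 + 1 = Posz 0)%R by lia.
  by rewrite /= ainvK.
- have -> : (Negz k.+1 + 1 = Negz k)%R by lia.
  by rewrite /= ainvK.
Qed.

Lemma autpowB1 (s : aut M) (n : int) x : autpow s (n - 1) x = ainv s (autpow s n x).
Proof. by apply: (can_inj (afunK s)); rewrite ainvK -autpowS subrK. Qed.

Lemma autpowD (s : aut M) (m n : int) x :
  autpow s m (autpow s n x) = autpow s (m + n) x.
Proof.
case: m => k; elim: k => [|k IH] /=; first by rewrite add0r.
- by rewrite /= in IH; rewrite IH -autpowS; congr autpow; lia.
- by rewrite -autpowB1; congr autpow; lia.
- by rewrite /= in IH; rewrite IH -autpowB1; congr autpow; lia.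
Qed.

End Satisfaction.

Section OrderPattern.
Variables (L : signature) (phi : formula L) (kx ky : nat).
Hypothesis phi_free : forall v, ffree phi v -> (v < kx + ky)%N.
Local Open Scope ring_scope.

Lemma phi_holds_automorphic (M : structure L) g a b : automorphic g ->
  (phi_holds M phi kx ky (g \o a) (g \o b) <-> phi_holds M phi kx ky a b).
Proof.
have envE : env kx (g \o a) (g \o b) = g \o env kx a b.
  by apply: functional_extensionality => j; rewrite /env /comp; case: ifP.
by rewrite /phi_holds envE !holdsE //; apply: sat_automorphic.
Qed.

Lemma phi_holds_autpow (M : structure L) (s : aut M) a b (i j : int) :
  phi_holds M phi kx ky (autpow s i \o a) (autpow s j \o b) <->
  xi s (inst M phi kx ky b) a (i - j).
Proof.
rewrite /xi /inst -[X in _ <-> X](phi_holds_automorphic _ _ (automorphic_autpow s j)).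
have -> // : autpow s j \o (autpow s (i - j) \o a) = autpow s i \o a.
by apply: functional_extensionality => k /=; rewrite autpowD; congr autpow; lia.
Qed.

Lemma order_pattern_of_block (M : structure L) (s : aut M) a b (n : nat) (k : int) :
  (forall i : int, - (n%:Z) <= i <= n%:Z ->
     (xi s (inst M phi kx ky b) a (k + i) <-> I10 i)) ->
  exists A B : nat -> nat -> M, forall i j, (i < n)%N -> (j < n)%N ->
    (phi_holds M phi kx ky (A i) (B j) <-> (i <= j)%N).
Proof.
move=> hblock; exists (fun i => autpow s (k + i%:Z) \o a), (fun j => autpow s j%:Z \o b).
move=> i j hi hj; rewrite phi_holds_autpow.
have -> : k + i%:Z - j%:Z = k + (i%:Z - j%:Z) by lia.
by rewrite hblock /I10; [split; lia | apply/andP; split; lia].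
Qed.

Lemma order_property_of_blocks (T : formula L -> Prop) :
  (exists (M : structure L) (s : aut M), models M T /\ forall n : nat,
     exists bn : nat -> M, exists J, xiM s (inst M phi kx ky bn) J /\ contains_block J n) ->
  order_property T phi kx ky.
Proof.
move=> [M [s [hM h]]]; exists M; split=> // n.
have [bn [J [[a ->] [k hk]]]] := h n.
exact: order_pattern_of_block hk.
Qed.

End OrderPattern.

Lemma contains_block_of_closure (S : (int -> Prop) -> Prop) :
  in_closure S I10 -> forall n, exists J, S J /\ contains_block J n.
Proof.
move=> hS n; have [J [SJ hJ]] := hS n.
by exists J; split=> //; exists 0%R => i hi; rewrite add0r; apply: hJ; lia.
Qed.

Record nonprincipal_ultrafilter (U : (nat -> Prop) -> Prop) : Prop := {
  ultraT : U (fun _ => True);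
  ultraI : forall A B, U A -> U B -> U (fun n => A n /\ B n);
  ultraS : forall A B : nat -> Prop, (forall n, A n -> B n) -> U A -> U B;
  ultra0 : ~ U (fun _ => False);
  ultraC : forall A, U A \/ U (fun n => ~ A n);
  ultra_gt : forall m, U (fun n => (m < n)%N) }.

Lemma nonprincipal_ultrafilter_exists : exists U, nonprincipal_ultrafilter U.
Proof.
have [U [ultraU cofU]] := filter.ultraFilterLemma filter.eventually_filter.
exists U; split.
- exact: filter.filterT.
- by move=> A B; apply: filter.filterI.
- by move=> A B; apply: filter.filterS.
- exact: filter.filter_not_empty.
- by move=> A; apply: filter.in_ultra_setVsetC.
- by move=> m; apply: cofU; exists m.+1.
Qed.

(* Coordinates: [Some i] for i in Z, and [None] for a top point oo. *)
Definition idx := option int.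

Definition upd_at (x : idx -> nat) (c : idx) (n : nat) : idx -> nat :=
  fun d => if d == c then n else x d.

Definition depends_on (P : pred idx) (A : (idx -> nat) -> Prop) :=
  forall x y, (forall c, P c -> x c = y c) -> (A x <-> A y).

Section IteratedQuantifier.
Variable U : (nat -> Prop) -> Prop.
Hypothesis HU : nonprincipal_ultrafilter U.

Lemma ultra_ext A B : (forall n, A n <-> B n) -> (U A <-> U B).
Proof. by move=> h; split; apply: (ultraS HU) => n /h. Qed.

Lemma ultra_const (P : Prop) : U (fun _ => P) <-> P.
Proof.
split=> [h|p]; last exact: (ultraS HU) (ultraT HU).
by apply: NNPP => np; apply: (ultra0 HU); apply: (ultraS HU) h.
Qed.

Lemma ultra_and A B : U (fun n => A n /\ B n) <-> U A /\ U B.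
Proof. by split=> [h|[]]; [split; apply: (ultraS HU) h => n [] | apply: (ultraI HU)]. Qed.

Lemma ultra_not A : U (fun n => ~ A n) <-> ~ U A.
Proof.
split=> [h hA|h]; last by case: (ultraC HU A).
by apply: (ultra0 HU); apply: (ultraS HU) (ultraI HU hA h) => n [].
Qed.

Fixpoint Umost (s : seq idx) (A : (idx -> nat) -> Prop) (x : idx -> nat) : Prop :=
  if s is c :: s' then U (fun n => Umost s' A (upd_at x c n)) else A x.

Lemma Umost_ext s A B x :
  (forall y, (forall c, c \notin s -> y c = x c) -> (A y <-> B y)) ->
  (Umost s A x <-> Umost s B x).
Proof.
elim: s x => [|c s IH] x h /=; first exact: h.
apply: ultra_ext => n; apply: IH => y hy; apply: h => d.
by rewrite in_cons negb_or => /andP [dc ds]; rewrite hy // /upd_at (negbTE dc).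
Qed.

Lemma Umost_mono s (A B : (idx -> nat) -> Prop) x :
  (forall y, A y -> B y) -> Umost s A x -> Umost s B x.
Proof.
elim: s x => [|c s IH] x h /=; first exact: h.
by apply: (ultraS HU) => n; apply: IH.
Qed.

Lemma Umost_and s A B x :
  Umost s (fun y => A y /\ B y) x <-> Umost s A x /\ Umost s B x.
Proof. by elim: s x => [|c s IH] x //=; rewrite -ultra_and; apply: ultra_ext. Qed.

Lemma Umost_not s A x : Umost s (fun y => ~ A y) x <-> ~ Umost s A x.
Proof. by elim: s x => [|c s IH] x //=; rewrite -ultra_not; apply: ultra_ext. Qed.

Lemma Umost_const s (P : Prop) x : Umost s (fun _ => P) x <-> P.
Proof.
elim: s x => [|c s IH] x //=.
by apply: iff_trans (ultra_const P); apply: ultra_ext.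
Qed.

Lemma Umost_depends (P : pred idx) s A x y : depends_on P A ->
  (forall c, P c -> c \notin s -> x c = y c) -> (Umost s A x <-> Umost s A y).
Proof.
move=> hA; elim: s x y => [|c s IH] x y h /=; first by apply: hA => c Pc; apply: h.
apply: ultra_ext => n; apply: IH => d Pd ds; rewrite /upd_at.
by case: eqP => // /eqP dc; apply: h; rewrite // in_cons negb_or dc.
Qed.

Lemma Umost_filter (P : pred idx) s A x :
  depends_on P A -> (Umost s A x <-> Umost (filter P s) A x).
Proof.
move=> hA; elim: s x => [|c s IH] x //=.
case: ifP => Pc /=; first by apply: ultra_ext.
apply: iff_trans (ultra_const (Umost (filter P s) A x)); apply: ultra_ext => n.
rewrite IH; apply: (Umost_depends hA) => d Pd _; rewrite /upd_at.
by case: eqP => // dc; rewrite dc Pc in Pd.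
Qed.

Lemma Umost_rename s s' (C : seq nat -> Prop) x x' :
  uniq s -> uniq s' -> size s = size s' ->
  (Umost s (fun y => C (map y s)) x <-> Umost s' (fun y => C (map y s')) x').
Proof.
elim: s s' C x x' => [|c s IH] [|c' s'] C x x' //= /andP [cs us] /andP [cs' us'] [sz].
apply: ultra_ext => n.
rewrite (@Umost_ext s _ (fun y => C (n :: map y s))); last first.
  by move=> y hy; rewrite hy /upd_at ?eqxx.
rewrite (@Umost_ext s' _ (fun y => C (n :: map y s'))); last first.
  by move=> y hy; rewrite hy /upd_at ?eqxx.
exact: (IH s' (fun l => C (n :: l))).
Qed.

End IteratedQuantifier.

Definition fill (s : seq idx) (l : seq nat) : idx -> nat := fun c => nth 0%N l (index c s).

Lemma fill_map s y c : c \in s -> fill s (map y s) c = y c.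
Proof. by move=> cs; rewrite /fill (nth_map c) ?index_mem // nth_index. Qed.

Lemma depends_fill s A y : depends_on (mem s) A -> (A y <-> A (fill s (map y s))).
Proof. by move=> h; apply: h => c cs; rewrite fill_map. Qed.

Lemma filter_mem_sorted (T : eqType) (r : rel T) (s l : seq T) :
  transitive r -> irreflexive r -> sorted r s -> sorted r l -> {subset s <= l} ->
  filter (mem s) l = s.
Proof.
move=> rtr rirr ss sl sub; apply: (irr_sorted_eq rtr rirr) => //.
  exact: sorted_filter.
by move=> c; rewrite mem_filter /=; apply/andP/idP => [[]|cs] //; split=> //; apply: sub.
Qed.

Section Windows.
Local Open Scope ring_scope.

Definition lt_idx (c d : idx) : bool :=
  match c, d with
  | Some i, Some j => i < j
  | Some _, None => true
  | None, _ => false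
  end.

Lemma lt_idx_trans : transitive lt_idx.
Proof. by move=> [b|] [a|] [c|] //=; apply: lt_trans. Qed.

Lemma lt_idx_irr : irreflexive lt_idx.
Proof. by move=> [a|] //=; rewrite ltxx. Qed.

Lemma sorted_lt_idx (w : seq int) : sorted <%R w -> sorted lt_idx (map Some w ++ [:: None]).
Proof. by elim: w => //= a [|b w] IH //= /andP [-> /IH]. Qed.

Lemma uniq_lt_idx (s : seq idx) : sorted lt_idx s -> uniq s.
Proof. by apply: path.sorted_uniq; [apply: lt_idx_trans | apply: lt_idx_irr]. Qed.

Definition window (N : nat) : seq idx :=
  [seq Some (k%:Z - N%:Z) | k <- iota 0 N.*2.+1] ++ [:: None].

Lemma mem_window_Some N a : (Some a \in window N) = (- (N%:Z) <= a <= N%:Z).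
Proof.
rewrite mem_cat mem_seq1 orbF; apply/mapP/idP => [[k]|h].
  by rewrite mem_iota => /andP [_ hk] [->]; apply/andP; split; lia.
by exists (absz (a + N%:Z)); [rewrite mem_iota; apply/andP; split | congr Some]; lia.
Qed.

Lemma mem_window_None N : None \in window N.
Proof. by rewrite mem_cat mem_seq1 eqxx orbT. Qed.

Lemma sorted_window N : sorted lt_idx (window N).
Proof.
rewrite /window (_ : [seq _ | k <- _] = map Some [seq k%:Z - N%:Z | k <- iota 0 N.*2.+1]).
  2: by rewrite -map_comp.
apply: sorted_lt_idx; apply: (homo_sorted (e := ltn)); last exact: iota_ltn_sorted.
by move=> x y /= h; lia.
Qed.

Lemma window_subset N N' : (N <= N')%N -> {subset window N <= window N'}.
Proof.
move=> NN' [a|] ha; last exact: mem_window_None.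
by move: ha; rewrite !mem_window_Some => /andP [h1 h2]; apply/andP; split; lia.
Qed.

End Windows.

Section Large.
Variable U : (nat -> Prop) -> Prop.
Hypothesis HU : nonprincipal_ultrafilter U.
Local Open Scope ring_scope.

Definition idx0 : idx -> nat := fun _ => 0%N.

Definition large (A : (idx -> nat) -> Prop) : Prop :=
  exists N B, depends_on (mem (window N)) B /\ Umost U (window N) B idx0 /\
    forall x, B x -> A x.

Lemma depends_on_subset (P P' : pred idx) A :
  (forall c, P c -> P' c) -> depends_on P A -> depends_on P' A.
Proof. by move=> PP' hA x y e; apply: hA => c /PP'; apply: e. Qed.

Lemma Umost_window_sorted s N A :
  depends_on (mem s) A -> sorted lt_idx s -> {subset s <= window N} ->
  (Umost U (window N) A idx0 <-> Umost U s A idx0).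
Proof.
move=> hA ss sub; rewrite (Umost_filter HU _ _ hA).
by rewrite (filter_mem_sorted lt_idx_trans lt_idx_irr ss (sorted_window N) sub).
Qed.

Lemma largeP s A N : depends_on (mem s) A -> sorted lt_idx s -> {subset s <= window N} ->
  (large A <-> Umost U s A idx0).
Proof.
move=> hA ss sub; split=> [[N' [B [hB [QB BA]]]] | h].
  have sub' := window_subset (leq_maxr N N').
  rewrite -(@Umost_window_sorted s (maxn N N')) //; last by move=> c /sub /(window_subset (leq_maxl N N')).
  apply: (Umost_mono HU BA); rewrite (@Umost_window_sorted (window N')) //; exact: sorted_window.
exists N, A; split; first exact: depends_on_subset hA.
by split=> //; rewrite (@Umost_window_sorted s).
Qed.

Lemma largeW N A : depends_on (mem (window N)) A -> (large A <-> Umost U (window N) A idx0).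
Proof. by move=> hA; apply: largeP hA (sorted_window N) (fun c hc => hc). Qed.

Lemma large_of_all (A : (idx -> nat) -> Prop) : (forall x, A x) -> large A.
Proof.
by move=> hA; exists 0%N, (fun _ => True); split=> //; split; [apply/(Umost_const HU) | move=> x _].
Qed.

Lemma large_mono (A B : (idx -> nat) -> Prop) : (forall x, A x -> B x) -> large A -> large B.
Proof. by move=> AB [N [C [hC [QC CA]]]]; exists N, C; split=> //; split=> // x /CA /AB. Qed.

Lemma large_and A B : large A -> large B -> large (fun x => A x /\ B x).
Proof.
move=> [N [C [hC [QC CA]]]] [N' [D [hD [QD DB]]]].
apply: (large_mono (A := fun x => C x /\ D x)); first by move=> x [/CA ? /DB ?].
have hC' := depends_on_subset (window_subset (leq_maxl N N')) hC.
have hD' := depends_on_subset (window_subset (leq_maxr N N')) hD.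
rewrite (@largeW (maxn N N')); last by move=> x y e; rewrite (hC' x y e) (hD' x y e).
by rewrite (Umost_and HU) -!largeW //; split; [exists N, C | exists N', D].
Qed.

Lemma large_False : ~ large (fun _ => False).
Proof. by move=> [N [B [_ [QB BF]]]]; move/(Umost_const HU): (Umost_mono HU BF QB). Qed.

Lemma large_or_not N A : depends_on (mem (window N)) A -> large A \/ large (fun x => ~ A x).
Proof.
move=> hA; rewrite (largeW hA) largeW ?(Umost_not HU); first exact: classic.
by move=> x y e; rewrite (hA x y e).
Qed.

Lemma large_iff (A B C : (idx -> nat) -> Prop) :
  large A -> (forall x, A x -> (B x <-> C x)) -> (large B <-> large C).
Proof.
by move=> hA h; split=> /(large_and hA); apply: large_mono => x [/h ->].
Qed.

Lemma large_all k (A : nat -> (idx -> nat) -> Prop) :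
  (forall j, (j < k)%N -> large (A j)) -> large (fun x => forall j, (j < k)%N -> A j x).
Proof.
elim: k => [|k IH] h; first exact: large_of_all.
apply: large_mono (large_and (IH (fun j hj => h j (ltnW hj))) (h k (ltnSn k))).
by move=> x [hx hk] j; rewrite ltnS leq_eqVlt => /orP [/eqP -> | /hx].
Qed.

Lemma large_ord n (A : 'I_n -> (idx -> nat) -> Prop) :
  (forall i, large (A i)) -> large (fun x => forall i, A i x).
Proof.
move=> h; apply: (large_mono (A := fun x => forall j, (j < n)%N ->
                                   forall i : 'I_n, val i = j -> A i x)).
  by move=> x hx i; apply: hx (ltn_ord i) i erefl.
apply: large_all => j hj; apply: large_mono (h (Ordinal hj)).
by move=> x hx i ij; rewrite (_ : i = Ordinal hj) //; apply: val_inj.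
Qed.

Definition shift_idx (d : int) (c : idx) : idx := if c is Some i then Some (i + d) else None.
Definition shift (d : int) (x : idx -> nat) : idx -> nat := x \o shift_idx d.

Lemma shift_window d N : {subset map (shift_idx d) (window N) <= window (N + `|d|)}.
Proof.
move=> c /mapP [[a|] ha ->] /=; last exact: mem_window_None.
by move: ha; rewrite !mem_window_Some => /andP [h1 h2]; apply/andP; split; lia.
Qed.

Lemma shiftD d e x : shift d (shift e x) = shift (d + e) x.
Proof. by apply: functional_extensionality => -[a|] //=; rewrite /shift /= addrA. Qed.

Lemma shift0 x : shift 0 x = x.
Proof. by apply: functional_extensionality => -[a|] //=; rewrite /shift /= addr0. Qed.

(* Shifting is an order-preserving renaming of coordinates. *)
Lemma large_shift d A : large A -> large (fun x => A (shift d x)).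
Proof.
move=> [N [B [hB [QB BA]]]]; apply: large_mono (fun x => BA (shift d x)) _.
pose s := map (shift_idx d) (window N).
have ss : sorted lt_idx s.
  by apply: homo_sorted (sorted_window N) => -[a|] [b|] //=; rewrite ltrD2r.
have hBs : depends_on (mem s) (fun x => B (shift d x)).
  by move=> x y e; apply: hB => c cN; apply: e; apply: map_f.
rewrite (largeP hBs ss (@shift_window d N)).
pose C l := B (fill (window N) l).
rewrite (@Umost_ext _ HU _ _ (fun y => C (map y s))); last first.
  by move=> y _; rewrite /C /s -map_comp; apply: (depends_fill (shift d y) hB).
rewrite (@Umost_rename _ HU s (window N) C idx0 idx0) ?size_map //.
- by rewrite -(@Umost_ext _ HU _ B) // => y _; apply: depends_fill y hB.
- exact: uniq_lt_idx.
- exact: uniq_lt_idx (sorted_window N).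
Qed.

Lemma large_shiftE d A : large (fun x => A (shift d x)) <-> large A.
Proof.
split; last exact: large_shift.
by move=> /(large_shift (- d)); apply: large_mono => x; rewrite shiftD subrr shift0.
Qed.

End Large.

Definition fun_depends_on (T : Type) (P : pred idx) (F : (idx -> nat) -> T) :=
  forall x y, (forall c, P c -> x c = y c) -> F x = F y.

Lemma fun_depends_on_window T N N' (F : (idx -> nat) -> T) :
  (N <= N')%N -> fun_depends_on (mem (window N)) F -> fun_depends_on (mem (window N')) F.
Proof. by move=> NN' hF x y e; apply: hF => c /(window_subset NN'); apply: e. Qed.

Section Ultrapower.
Variables (L : signature) (M0 : structure L).
Variable U : (nat -> Prop) -> Prop.
Hypothesis HU : nonprincipal_ultrafilter U.
Local Notation large := (large U).

Record rep := Rep {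
  rep_win : nat;
  rep_fun : (idx -> nat) -> M0;
  rep_dep : fun_depends_on (mem (window rep_win)) rep_fun }.

Definition rep_eq (r r' : rep) := large (fun x => rep_fun r x = rep_fun r' x).

Lemma rep_eq_refl r : rep_eq r r.
Proof. exact: large_of_all. Qed.

Lemma rep_eq_sym r r' : rep_eq r r' -> rep_eq r' r.
Proof. exact: large_mono. Qed.

Lemma rep_eq_trans r1 r2 r3 : rep_eq r1 r2 -> rep_eq r2 r3 -> rep_eq r1 r3.
Proof. by move=> h1 h2; apply: large_mono (large_and HU h1 h2) => x [-> ->]. Qed.

(* The quotient by [rep_eq] is realised by canonical representatives. *)
Definition canon (r : rep) : rep := epsilon (inhabits r) (fun r' => rep_eq r' r).

Lemma canon_spec r : rep_eq (canon r) r.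
Proof. by apply: (epsilon_spec (inhabits r) (fun r0 => rep_eq r0 r)); exists r; apply: rep_eq_refl. Qed.

Lemma canon_eq r r' : rep_eq r r' -> canon r = canon r'.
Proof.
move=> h; rewrite /canon (proof_irrelevance _ (inhabits r) (inhabits r')).
congr epsilon; apply: functional_extensionality => r0; apply: propositional_extensionality.
by split=> h0; [apply: rep_eq_trans h0 h | apply: rep_eq_trans h0 (rep_eq_sym h)].
Qed.

Definition upow := {r : rep | canon r = r}.

Definition cls (r : rep) : upow := exist _ (canon r) (canon_eq (canon_spec r)).
Definition ufun (q : upow) := rep_fun (proj1_sig q).
Definition uwin (q : upow) := rep_win (proj1_sig q).

Lemma ufun_dep q : fun_depends_on (mem (window (uwin q))) (ufun q).
Proof. exact: rep_dep. Qed.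

Lemma cls_val q : cls (proj1_sig q) = q.
Proof. by case: q => r hr; apply: subset_eq_compat. Qed.

Lemma ufun_cls r : large (fun x => ufun (cls r) x = rep_fun r x).
Proof. exact: canon_spec. Qed.

Lemma cls_eq r r' : cls r = cls r' <-> rep_eq r r'.
Proof.
split=> [/(f_equal (@proj1_sig _ _)) /= h | h]; last by apply: subset_eq_compat; apply: canon_eq.
by apply: rep_eq_trans (rep_eq_sym (canon_spec r)) _; rewrite h; apply: canon_spec.
Qed.

Lemma upow_eq (q q' : upow) : q = q' <-> large (fun x => ufun q x = ufun q' x).
Proof. by rewrite -[q]cls_val -[q']cls_val cls_eq !cls_val. Qed.

Definition max_win n (ms : 'I_n -> upow) := \max_(i < n) uwin (ms i).

Lemma max_win_dep n (ms : 'I_n -> upow) i :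
  fun_depends_on (mem (window (max_win ms))) (ufun (ms i)).
Proof. exact: fun_depends_on_window (leq_bigmax (F := fun i => uwin (ms i)) i) (@ufun_dep (ms i)). Qed.

Lemma fint_dep f (ms : 'I_(fari f) -> upow) :
  fun_depends_on (mem (window (max_win ms))) (fun x => @fint L M0 f (fun i => ufun (ms i) x)).
Proof.
move=> x y e; congr fint; apply: functional_extensionality => i.
exact: max_win_dep.
Qed.

Definition upow_fint f (ms : 'I_(fari f) -> upow) : upow := cls (Rep (@fint_dep f ms)).
Definition upow_rint r (ms : 'I_(rari r) -> upow) : Prop :=
  large (fun x => @rint L M0 r (fun i => ufun (ms i) x)).

Lemma upow_inhabited : inhabited upow.
Proof. by case: (nonempty M0) => m0; constructor; apply: cls (@Rep 0 (fun _ => m0) _). Qed.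

Definition ultrapower : structure L := @Structure L upow upow_inhabited upow_fint upow_rint.

Definition valuation_at (v : nat -> upow) (x : idx -> nat) : nat -> M0 := fun j => ufun (v j) x.

Lemma eval_los (v : nat -> upow) t :
  large (fun x => ufun (eval ultrapower v t) x = eval M0 (valuation_at v x) t).
Proof.
elim: t => [i|f ts IH] /=; first exact: large_of_all.
apply: large_mono (large_and HU (ufun_cls (Rep (@fint_dep f (fun i => eval ultrapower v (ts i)))))
                                (large_ord HU IH)) => x [-> h2] /=.
by congr fint; apply: functional_extensionality => i; apply: h2.
Qed.

Lemma sat_depends_window (v : nat -> upow) p :
  exists N, depends_on (mem (window N)) (fun x => sat M0 (valuation_at v x) p).
Proof.
have [K hK] := formula_free_bounded p.
exists (\max_(j < K) uwin (v j)) => x y e; apply: sat_ext => j /hK hj.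
apply: (fun_depends_on_window _ (@ufun_dep (v j))) e.
exact: (leq_bigmax (F := fun j : 'I_K => uwin (v j)) (Ordinal hj)).
Qed.

Lemma valuation_at_upd v i m x :
  valuation_at (upd ultrapower v i m) x = upd M0 (valuation_at v x) i (ufun m x).
Proof. by apply: functional_extensionality => j; rewrite /valuation_at /upd; case: eqP. Qed.

Section Los.
Variable v : nat -> upow.

Lemma los_eq (t1 t2 : term L) :
  sat ultrapower v (FEq t1 t2) <-> large (fun x => sat M0 (valuation_at v x) (FEq t1 t2)).
Proof.
rewrite /= upow_eq; apply: (large_iff HU) (large_and HU (eval_los v t1) (eval_los v t2)) _.
by move=> x [-> ->].
Qed.

Lemma los_rel (r : rsym L) (ts : 'I_(rari r) -> term L) :
  sat ultrapower v (FRel ts) <-> large (fun x => sat M0 (valuation_at v x) (FRel ts)).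
Proof.
apply: (large_iff HU) (large_ord HU (fun i => eval_los v (ts i))) _ => x he /=.
by rewrite (_ : (fun i => _) = (fun i => eval M0 (valuation_at v x) (ts i))) //;
  apply: functional_extensionality.
Qed.

Lemma los_not (q : formula L) : (sat ultrapower v q <-> large (fun x => sat M0 (valuation_at v x) q)) ->
  sat ultrapower v (FNot q) <-> large (fun x => sat M0 (valuation_at v x) (FNot q)).
Proof.
move=> /= ->; have [N hN] := sat_depends_window v q.
split=> [h|h h']; first by case: (large_or_not HU hN).
by apply: (large_False HU); apply: large_mono (large_and HU h h') => x [].
Qed.

Lemma los_and (q1 q2 : formula L) :
  (sat ultrapower v q1 <-> large (fun x => sat M0 (valuation_at v x) q1)) ->
  (sat ultrapower v q2 <-> large (fun x => sat M0 (valuation_at v x) q2)) ->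
  sat ultrapower v (FAnd q1 q2) <-> large (fun x => sat M0 (valuation_at v x) (FAnd q1 q2)).
Proof.
move=> /= -> ->; split=> [[h1 h2]|h]; first exact: large_and.
by split; apply: large_mono h => x [].
Qed.

(* The witness is chosen pointwise by choice; it depends only on the window
   that determines the values of the free variables of q. *)
Lemma los_ex i (q : formula L) :
  (forall w, sat ultrapower w q <-> large (fun x => sat M0 (valuation_at w x) q)) ->
  sat ultrapower v (FEx i q) <-> large (fun x => sat M0 (valuation_at v x) (FEx i q)).
Proof.
move=> IH /=; split=> [[m] | h].
  by rewrite IH; apply: large_mono => x; rewrite valuation_at_upd => h; exists (ufun m x).
have [K hK] := formula_free_bounded q.
pose N := \max_(j < K) uwin (v j).
pose P x m := sat M0 (upd M0 (valuation_at v x) i m) q.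
pose G x := epsilon (nonempty M0) (P x).
have hG : fun_depends_on (mem (window N)) G.
  move=> x y e; rewrite /G; congr epsilon.
  apply: functional_extensionality => m; apply: propositional_extensionality.
  apply: sat_ext => j /hK hj; rewrite /upd; case: eqP => // _.
  apply: (fun_depends_on_window _ (@ufun_dep (v j))) e.
  exact: (leq_bigmax (F := fun j : 'I_K => uwin (v j)) (Ordinal hj)).
exists (cls (Rep hG)); rewrite IH.
apply: large_mono (large_and HU h (ufun_cls (Rep hG))) => x [hx e].
by rewrite valuation_at_upd e; apply: (epsilon_spec (nonempty M0) (P x) hx).
Qed.

End Los.

Theorem los p (v : nat -> upow) :
  sat ultrapower v p <-> large (fun x => sat M0 (valuation_at v x) p).
Proof.
elim: p v => [t1 t2|r ts|q IH|q1 IH1 q2 IH2|i q IH] v.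
- exact: los_eq.
- exact: los_rel.
- exact: los_not.
- exact: los_and.
- exact: los_ex.
Qed.

Lemma models_ultrapower (T : formula L -> Prop) : models M0 T -> models ultrapower T.
Proof. by move=> hM p Tp v; apply/los; apply: (large_of_all HU) => x; apply: hM. Qed.

Lemma large_sat_congr (w1 w2 : (idx -> nat) -> nat -> M0) p K :
  (forall j, ffree p j -> (j < K)%N) ->
  (forall j, (j < K)%N -> large (fun x => w1 x j = w2 x j)) ->
  (large (fun x => sat M0 (w1 x) p) <-> large (fun x => sat M0 (w2 x) p)).
Proof.
move=> hK h; apply: (large_iff HU) (large_all HU h) _ => x hx.
by apply: sat_ext => j /hK; apply: hx.
Qed.

Local Open Scope ring_scope.

Lemma shift_rep_dep d (r : rep) :
  fun_depends_on (mem (window (rep_win r + `|d|))) (fun x => rep_fun r (shift d x)).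
Proof. by move=> x y e; apply: rep_dep => c hc; apply: e; apply: shift_window (map_f _ hc). Qed.

Definition shift_rep d r : rep := Rep (@shift_rep_dep d r).

Lemma cls_shift_rep d r : cls (shift_rep d (proj1_sig (cls r))) = cls (shift_rep d r).
Proof. exact/cls_eq/(large_shift HU d (canon_spec r)). Qed.

Lemma cls_shift_repD d e r : cls (shift_rep d (shift_rep e r)) = cls (shift_rep (e + d) r).
Proof. by apply/cls_eq; apply: (large_of_all HU) => x /=; rewrite shiftD. Qed.

Lemma cls_shift_rep0 r : cls (shift_rep 0 r) = cls r.
Proof. by apply/cls_eq; apply: (large_of_all HU) => x /=; rewrite shift0. Qed.

Definition upow_shift (q : upow) : upow := cls (shift_rep 1 (proj1_sig q)).
Definition upow_unshift (q : upow) : upow := cls (shift_rep (-1) (proj1_sig q)).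

Lemma upow_shiftK : cancel upow_shift upow_unshift.
Proof.
by move=> q; rewrite /upow_unshift cls_shift_rep cls_shift_repD addrN cls_shift_rep0 cls_val.
Qed.

Lemma upow_unshiftK : cancel upow_unshift upow_shift.
Proof.
by move=> q; rewrite /upow_shift cls_shift_rep cls_shift_repD addNr cls_shift_rep0 cls_val.
Qed.

Lemma ufun_shift q : large (fun x => ufun (upow_shift q) x = ufun q (shift 1 x)).
Proof. exact: ufun_cls. Qed.

Lemma upow_shift_fint f (ms : 'I_(fari f) -> upow) :
  upow_shift (upow_fint ms) = upow_fint (upow_shift \o ms).
Proof.
rewrite /upow_shift /upow_fint cls_shift_rep; apply/cls_eq.
apply: large_mono (large_ord HU (fun i => ufun_shift (ms i))) => x hx /=.
by congr fint; apply: functional_extensionality => i; rewrite hx.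
Qed.

Lemma upow_shift_rint r (ms : 'I_(rari r) -> upow) :
  upow_rint ms <-> upow_rint (upow_shift \o ms).
Proof.
rewrite /upow_rint -(large_shiftE HU 1).
apply: (large_iff HU) (large_ord HU (fun i => ufun_shift (ms i))) _ => x hx.
by rewrite (_ : (fun i => _) = (fun i => ufun (ms i) (shift 1 x))) //;
  apply: functional_extensionality => i /=; rewrite hx.
Qed.

Definition shift_aut : aut ultrapower :=
  @Aut L ultrapower upow_shift upow_unshift upow_shiftK upow_unshiftK
    upow_shift_fint upow_shift_rint.

Lemma autpow_cls (n : int) r : autpow shift_aut n (cls r) = cls (shift_rep n r).
Proof.
case: n => k; elim: k => [|k IH].
- by rewrite cls_shift_rep0.
- by rewrite -addn1 PoszD autpowS IH /= /upow_shift cls_shift_rep cls_shift_repD.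
- by rewrite (_ : Negz 0 = 0 - 1) // autpowB1 /= /upow_unshift cls_shift_rep sub0r.
- rewrite (_ : Negz k.+1 = Negz k - 1); last by lia.
  by rewrite autpowB1 IH /= /upow_unshift cls_shift_rep cls_shift_repD.
Qed.

Lemma coord_rep_dep (g : nat -> nat -> M0) (i : int) :
  fun_depends_on (mem (window `|i|)) (fun x => g (x None) (x (Some i))).
Proof.
have hi : Some i \in window `|i| by rewrite mem_window_Some; apply/andP; split; lia.
by move=> x y e; rewrite (e None (mem_window_None _)) (e (Some i) hi).
Qed.

Definition coord_rep g i : rep := Rep (@coord_rep_dep g i).

Lemma autpow_coord g (n : int) : autpow shift_aut n (cls (coord_rep g 0)) = cls (coord_rep g n).
Proof. by rewrite autpow_cls; apply/cls_eq; apply: (large_of_all HU) => x /=; rewrite /shift /= add0r. Qed.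

Lemma ufun_coord g n : large (fun x => ufun (cls (coord_rep g n)) x = g (x None) (x (Some n))).
Proof. exact: ufun_cls. Qed.

End Ultrapower.

Section LargeOrder.
Variable U : (nat -> Prop) -> Prop.
Hypothesis HU : nonprincipal_ultrafilter U.
Local Open Scope ring_scope.

Definition idx_norm (c : idx) : nat := if c is Some i then `|i|%N else 0%N.

Lemma mem_window_norm c N : (idx_norm c <= N)%N -> c \in window N.
Proof.
case: c => [a|] /= h; last exact: mem_window_None.
by rewrite mem_window_Some; apply/andP; split; lia.
Qed.

(* Since U is nonprincipal, U-most n_d exceed a given n_c. *)
Lemma large_lt c d : lt_idx c d -> large U (fun x => (x c < x d)%N).
Proof.
move=> cd; have cnd : c != d by apply: contraTneq cd => ->; rewrite lt_idx_irr.
rewrite (@largeP _ HU [:: c; d] _ (maxn (idx_norm c) (idx_norm d))).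
- apply: (ultraS HU) (ultraT HU) => a _; apply: (ultraS HU) (ultra_gt HU a) => b /=.
  by rewrite /upd_at (negbTE cnd) !eqxx.
- by move=> x y e; rewrite (e c) ?(e d) // !inE eqxx ?orbT.
- by rewrite /= cd.
- by move=> e; rewrite !inE => /orP [] /eqP ->; apply: mem_window_norm; rewrite leq_max leqnn ?orbT.
Qed.

Definition chain (i : nat -> int) (k : nat) : seq idx :=
  [seq Some (i m) | m <- iota 0 k] ++ [:: None].

Lemma nth_chain (x : idx -> nat) i k m :
  (m < k)%N -> nth 0%N (map x (chain i k)) m = x (Some (i m)).
Proof.
move=> mk; rewrite map_cat -map_comp nth_cat size_map size_iota mk.
by rewrite (nth_map 0%N) ?size_iota // nth_iota.
Qed.

Lemma nth_chain_top (x : idx -> nat) i k : nth 0%N (map x (chain i k)) k = x None.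
Proof. by rewrite map_cat -map_comp nth_cat size_map size_iota ltnn subnn. Qed.

Lemma size_chain i k : size (chain i k) = k.+1.
Proof. by rewrite size_cat size_map size_iota addn1. Qed.

Lemma sorted_chain i k : (forall m, (m.+1 < k)%N -> i m < i m.+1) -> sorted lt_idx (chain i k).
Proof.
move=> iinc; rewrite /chain (_ : [seq _ | m <- _] = map Some (map i (iota 0 k))).
  2: by rewrite -map_comp.
apply: sorted_lt_idx; rewrite sorted_map.
suff gen a n : (forall m, (a <= m)%N -> (m.+1 < a + n)%N -> i m < i m.+1) ->
    sorted (relpre i <%R) (iota a n).
  by apply: gen => m _; rewrite add0n; apply: iinc.
elim: n a => [|[|n] IH] a h //=; apply/andP; split.
- by apply: h; lia.
- by apply: (IH a.+1) => m am mn; apply: h; lia.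
Qed.

Lemma chain_window i k : {subset chain i k <= window (\max_(m < k) `|i m|%N)}.
Proof.
move=> c; rewrite mem_cat mem_seq1 => /orP [/mapP [m hm ->] | /eqP ->]; last exact: mem_window_None.
rewrite mem_iota add0n in hm; move: hm => /andP [_ hm].
by apply: mem_window_norm; apply: (leq_bigmax (F := fun m : 'I_k => `|i m|%N) (Ordinal hm)).
Qed.

End LargeOrder.

Section Witness.
Variables (L : signature) (M0 : structure L).
Variable U : (nat -> Prop) -> Prop.
Hypothesis HU : nonprincipal_ultrafilter U.
Local Open Scope ring_scope.
Local Notation UM := (ultrapower M0 HU).
Local Notation sU := (shift_aut M0 HU).

Definition coord_tuple (g : nat -> nat -> nat -> M0) : nat -> UM :=
  fun l => cls HU (coord_rep (fun N m => g N m l) 0).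

Lemma autpow_coord_tuple g (n : int) :
  autpow sU n \o coord_tuple g = fun l => cls HU (coord_rep (fun N m => g N m l) n).
Proof. by apply: functional_extensionality => l /=; rewrite autpow_coord. Qed.

Lemma xi_coord_tuple phi kx ky (al be : nat -> nat -> nat -> M0) :
  (forall v, ffree phi v -> (v < kx + ky)%N) ->
  (forall N i j, (i < N)%N -> (j < N)%N ->
     (phi_holds M0 phi kx ky (al N i) (be N j) <-> (i <= j)%N)) ->
  xi sU (inst UM phi kx ky (coord_tuple be)) (coord_tuple al) = I10.
Proof.
move=> hphi hop; apply: functional_extensionality => n; apply: propositional_extensionality.
rewrite /xi /inst autpow_coord_tuple /phi_holds holdsE // los.
rewrite (@large_sat_congr _ _ _ HU _
  (fun x => env kx (al (x None) (x (Some n))) (be (x None) (x (Some 0)))) _ _ hphi); last first.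
  by move=> j _; rewrite /valuation_at /env; case: ifP => _; apply: ufun_coord.
have below_top := large_and HU (@large_lt _ HU (Some n) None erefl) (@large_lt _ HU (Some 0) None erefl).
rewrite (large_iff HU below_top (C := fun x => (x (Some n) <= x (Some 0%R))%N)); last first.
  by move=> x [h1 h2]; rewrite -(holdsE _ hphi); apply: hop.
rewrite /I10; case: (ltgtP n 0) => hn.
- by split=> // _; apply: large_mono (@large_lt _ HU (Some n) (Some 0) hn) => x /ltnW.
- split=> // h; exfalso; apply: (large_False HU).
  by apply: large_mono (large_and HU h (@large_lt _ HU (Some 0) (Some n) hn)) => x [/leq_ltn_trans h1 /h1]; rewrite ltnn.
- by rewrite hn; split=> // _; apply: large_of_all.
Qed.

Definition chain_sat (be : nat -> nat -> nat -> M0) ky psi k (l : seq nat) :=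
  sat M0 (fun v => be (nth 0%N l k) (nth 0%N l (v %/ ky)) (v %% ky)%N) psi.

Lemma holds_coord_tuple_chain (be : nat -> nat -> nat -> M0) ky psi k (i : nat -> int) :
  (forall v, ffree psi v -> (v < k * ky)%N) -> (forall m, (m.+1 < k)%N -> i m < i m.+1) ->
  holds UM psi (k * ky) (fun v => (autpow sU (i (v %/ ky)%N) \o coord_tuple be) (v %% ky)%N) <->
  Umost U (chain i k) (fun y => chain_sat be ky psi k (map y (chain i k))) idx0.
Proof.
move=> hpsi hi; rewrite holdsE // los.
rewrite (@large_sat_congr _ _ _ HU _
  (fun x v => be (x None) (x (Some (i (v %/ ky)%N))) (v %% ky)%N) _ _ hpsi); last first.
  by move=> v _; rewrite /valuation_at /= autpow_coord; apply: ufun_coord.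
have chainE x : sat M0 (fun v => be (x None) (x (Some (i (v %/ ky)%N))) (v %% ky)%N) psi <->
                chain_sat be ky psi k (map x (chain i k)).
  apply: sat_ext => v /hpsi hv; rewrite nth_chain_top nth_chain //.
  by case: (posnP ky) hv => [-> | ky0]; rewrite ?muln0 // ltn_divLR.
rewrite (large_iff HU (large_of_all HU (fun _ => I)) (fun x _ => chainE x)).
rewrite (largeP HU _ (sorted_chain hi) (@chain_window i k)) // => x y e.
by have -> : map x (chain i k) = map y (chain i k) by apply/eq_in_map => c /e.
Qed.

Lemma coord_tuple_indiscernible (be : nat -> nat -> nat -> M0) ky :
  indiscernible ky (fun n => autpow sU n \o coord_tuple be).
Proof.
move=> psi k i j hpsi hi hj.
rewrite (holds_coord_tuple_chain _ hpsi hi) (holds_coord_tuple_chain _ hpsi hj).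
by apply: (Umost_rename HU); rewrite ?size_chain //; apply: uniq_lt_idx; apply: sorted_chain.
Qed.

End Witness.

Lemma order_property_indiscernible_witness (L : signature) (T : formula L -> Prop)
    (phi : formula L) (kx ky : nat) :
  (forall v, ffree phi v -> (v < kx + ky)%N) -> order_property T phi kx ky ->
  exists (M : structure L) (b : nat -> M) (s : aut M) (a : nat -> M),
    models M T /\ inW ky b s /\ xi s (inst M phi kx ky b) a = I10.
Proof.
move=> hphi [M0 [hM hop]]; have [U HU] := nonprincipal_ultrafilter_exists.
have [al [be hab]] : exists al be : nat -> nat -> nat -> M0, forall N i j,
    (i < N)%N -> (j < N)%N -> (phi_holds M0 phi kx ky (al N i) (be N j) <-> (i <= j)%N).
  have /choice [ab hab] : forall N, exists ab : (nat -> nat -> M0) * (nat -> nat -> M0),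
      forall i j, (i < N)%N -> (j < N)%N ->
        (phi_holds M0 phi kx ky (ab.1 i) (ab.2 j) <-> (i <= j)%N).
    by move=> N; have [a [b h]] := hop N; exists (a, b).
  by exists (fun N => (ab N).1), (fun N => (ab N).2).
exists (ultrapower M0 HU), (coord_tuple HU be), (shift_aut M0 HU), (coord_tuple HU al).
split; first exact: models_ultrapower.
by split; [apply: coord_tuple_indiscernible | apply: xi_coord_tuple].
Qed.

Theorem proposition4p10 (L : signature) (T : formula L -> Prop)
  (phi : formula L) (kx ky : nat) :
  complete_theory T ->
  (forall v, ffree phi v -> v < kx + ky) ->
  let P1 := order_property T phi kx ky in
  let P2 := exists (M : structure L) (b : nat -> M) (s : aut M) (a : nat -> M),
              models M T /\ xi s (inst M phi kx ky b) a = I10 in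
  let P3 := exists (M : structure L) (b : nat -> M) (s : aut M) (a : nat -> M),
              models M T /\ inW ky b s /\ xi s (inst M phi kx ky b) a = I10 in
  let P4 := exists (M : structure L) (b : nat -> M) (s : aut M),
              models M T /\ forall n : nat,
                exists J, xiM s (inst M phi kx ky b) J /\ contains_block J n in
  let P5 := exists (M : structure L) (s : aut M),
              models M T /\ forall n : nat, exists bn : nat -> M,
                exists J, xiM s (inst M phi kx ky bn) J /\ contains_block J n in
  let P6 := exists (M : structure L) (b : nat -> M) (s : aut M),
              models M T /\ in_closure (xiM s (inst M phi kx ky b)) I10 in
  let P7 := exists M : structure L, models M T /\ rho M phi kx ky I10 in
  (P1 <-> P2) /\ (P1 <-> P3) /\ (P1 <-> P4) /\ (P1 <-> P5) /\
  (P1 <-> P6) /\ (P1 <-> P7).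
Proof.
move=> _ hphi P1 P2 P3 P4 P5 P6 P7.
have h13 : P1 -> P3 := order_property_indiscernible_witness hphi.
have h32 : P3 -> P2 by case=> M [b [s [a [hM [_ h]]]]]; exists M, b, s, a.
have h26 : P2 -> P6.
  by case=> M [b [s [a [hM h]]]]; exists M, b, s; split=> // N; exists I10; split=> //; exists a.
have h64 : P6 -> P4.
  by case=> M [b [s [hM h]]]; exists M, b, s; split=> //; apply: contains_block_of_closure.
have h45 : P4 -> P5 by case=> M [b [s [hM h]]]; exists M, s; split=> // n; exists b.
have h51 : P5 -> P1 := order_property_of_blocks hphi (T := T).
have h27 : P2 <-> P7.
  split=> [[M [b [s [a [hM h]]]]] | [M [hM [b [s [a h]]]]]]; last by exists M, b, s, a.
  by exists M; split=> //; exists b, s, a.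
by clearbody P1 P2 P3 P4 P5 P6 P7; tauto.
Qed.
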